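(* Let $T$ be a triangle and $\bm{p}_2\in\mathcal{P}_2(T)^2$. Then $\bm{p}_2-\Pi_h^1\bm{p}_2=\nabla^\perp w$, where for every $\beta\in\{1,2,3\}$ $$w=\Big(\sum_{i,j,l=1}^2\alpha^i_{jl,\beta}\mathcal{D}^{jl}_{i,\beta}(\bm{p}_2)\Big)\psi_0+\sum_{k=1}^3\frac{\ell_k^3}{12}\mathcal{D}^{11}_{2,k}(\bm{p}_2)\psi_k.$$
   Context: $T$ has vertices $\bm{z}_1,\bm{z}_2,\bm{z}_3$ counterclockwise with barycentric coordinates $\lambda_1,\lambda_2,\lambda_3$, indices mod 3; $e_k$ is the edge opposite $\bm{z}_k$, $\ell_k$ its length, $\bm{t}_k$ the unit tangent oriented counterclockwise, $\bm{n}_k$ the unit outward normal; $d$ the diameter of the circumscribed circle. $\nabla^\perp v=(-\partial_{x_2}v,\partial_{x_1}v)^\intercal$. $\Pi_h^1\bm{q}\in\mathcal{RT}_1(T)=\{(v_1,v_2)^\intercal+v_3(x_1,x_2)^\intercal:v_i\in\mathcal{P}_1(T)\}$ with $\int_e(\bm{q}-\Pi_h^1\bm{q})\cdot\bm{n}_ev=0$ for all $v\in\mathcal{P}_1(e)$ on each edge and $\int_T(\bm{q}-\Pi_h^1\bm{q})=\bm{0}$. Bubbles: $\psi_0=\lambda_1\lambda_2\lambda_3$, $\psi_k=\lambda_{k-1}\lambda_{k+1}(\lambda_{k-1}-\lambda_{k+1})$, $k=1,2,3$. Operators: $\mathcal{D}_{1,k}^{11}\bm{q}=\bm{t}_k\cdot\partial_{\bm{t}_k}^2\bm{q}$,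 $\mathcal{D}_{1,k}^{12}\bm{q}=\mathcal{D}_{1,k}^{21}\bm{q}=\bm{t}_k\cdot\partial_{\bm{t}_k}\partial_{\bm{n}_k}\bm{q}$, $\mathcal{D}_{1,k}^{22}\bm{q}=\bm{t}_k\cdot\partial_{\bm{n}_k}^2\bm{q}$, and $\mathcal{D}_{2,k}^{jl}$ the same with $\bm{n}_k\cdot$ in place of $\bm{t}_k\cdot$. Coefficients: $\alpha^1_{11,k}=\frac{\ell_{k-1}\ell_{k+1}(3\ell_k^4-(\ell_{k-1}^2-\ell_{k+1}^2)^2)}{24d\ell_k^2}$; $\alpha^1_{12,k}=\alpha^1_{21,k}=\frac{\ell_{k-1}^2\ell_{k+1}^2(\ell_{k-1}^2-\ell_{k+1}^2)}{12d^2\ell_k}$; $\alpha^1_{22,k}=-\frac{\ell_{k+1}^3\ell_{k-1}^3}{6d^3}$; $\alpha^2_{11,k}=\frac{(\ell_{k-1}^2-\ell_{k+1}^2)(9\ell_k^4-(\ell_{k-1}^2-\ell_{k+1}^2)^2)}{48\ell_k^3}$; $\alpha^2_{12,k}=\alpha^2_{21,k}=-\alpha^1_{11,k}$; $\alpha^2_{22,k}=-\alpha^1_{12,k}$. *)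

From Stdlib Require Import Reals Lra Arith.
From Coquelicot Require Import Coquelicot.
Open Scope R_scope.

Definition pt := (R * R)%type.

Definition vadd (a b : pt) : pt := (fst a + fst b, snd a + snd b).
Definition vsub (a b : pt) : pt := (fst a - fst b, snd a - snd b).
Definition vscal (s : R) (a : pt) : pt := (s * fst a, s * snd a).
Definition dot (a b : pt) : R := fst a * fst b + snd a * snd b.
Definition cross (a b : pt) : R := fst a * snd b - snd a * fst b.
Definition vnorm (a : pt) : R := sqrt (dot a a).

Section Tri.
Variables z1 z2 z3 : pt.

(* vertex z_k, indices taken mod 3 (k = 1,2,3; k+1, k+2 = k-1 mod 3) *)
Definition vtx (k : nat) : pt :=
  match (k mod 3)%nat with 1%nat => z1 | 2%nat => z2 | _ => z3 end.

(* twice the signed area; positive iff z1,z2,z3 counterclockwise *)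
Definition area2 : R := cross (vsub z2 z1) (vsub z3 z1).

(* edge e_k is opposite z_k, from z_{k+1} to z_{k-1} (= z_{k+2}) *)
Definition elen (k : nat) : R := vnorm (vsub (vtx (k + 2)) (vtx (k + 1))).
Definition etan (k : nat) : pt := vscal (/ elen k) (vsub (vtx (k + 2)) (vtx (k + 1))).
(* outward unit normal (for a counterclockwise triangle) *)
Definition enrm (k : nat) : pt := (snd (etan k), - fst (etan k)).

Definition lam (k : nat) (x : pt) : R :=
  cross (vsub (vtx (k + 1)) x) (vsub (vtx (k + 2)) x) / area2.

Definition psi0 (x : pt) : R := lam 1 x * lam 2 x * lam 3 x.
Definition psi (k : nat) (x : pt) : R :=
  lam (k + 2) x * lam (k + 1) x * (lam (k + 2) x - lam (k + 1) x).

Definition in_tri (x : pt) : Prop :=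
  exists a b c : R, 0 <= a /\ 0 <= b /\ 0 <= c /\ a + b + c = 1 /\
    x = vadd (vscal a z1) (vadd (vscal b z2) (vscal c z3)).

Definition edge_int (k : nat) (f : pt -> R) : R :=
  elen k * RInt (fun s => f (vadd (vtx (k + 1)) (vscal s (vsub (vtx (k + 2)) (vtx (k + 1)))))) 0 1.

(* integral over T, through the affine parametrisation of T by the reference
   triangle (Jacobian = area2 = 2|T|) *)
Definition tri_int (f : pt -> R) : R :=
  area2 * RInt (fun s => RInt (fun t =>
     f (vadd z1 (vadd (vscal s (vsub z2 z1)) (vscal t (vsub z3 z1))))) 0 (1 - s)) 0 1.
End Tri.

Definition is_P1 (v : pt -> R) : Prop :=
  exists a b c : R, forall x, v x = a + b * fst x + c * snd x.
Definition is_P2 (v : pt -> R) : Prop :=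
  exists a b c e f g : R, forall x,
    v x = a + b * fst x + c * snd x + e * fst x ^ 2 + f * fst x * snd x + g * snd x ^ 2.
Definition is_P2vec (q : pt -> pt) : Prop :=
  is_P2 (fun x => fst (q x)) /\ is_P2 (fun x => snd (q x)).

Definition in_RT1 (r : pt -> pt) : Prop :=
  exists v1 v2 v3 : pt -> R, is_P1 v1 /\ is_P1 v2 /\ is_P1 v3 /\
    forall x, r x = (v1 x + v3 x * fst x, v2 x + v3 x * snd x).

(* r = Pi_h^1 q : defining conditions of the RT_1 interpolant *)
Definition is_Pi1 (z1 z2 z3 : pt) (q r : pt -> pt) : Prop :=
  in_RT1 r /\
  (forall k : nat, (1 <= k <= 3)%nat -> forall v : pt -> R, is_P1 v ->
     edge_int z1 z2 z3 k (fun x => dot (vsub (q x) (r x)) (enrm z1 z2 z3 k) * v x) = 0) /\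
  tri_int z1 z2 z3 (fun x => fst (q x) - fst (r x)) = 0 /\
  tri_int z1 z2 z3 (fun x => snd (q x) - snd (r x)) = 0.

(* second directional derivative  d_a d_b f, evaluated at the origin
   (for the quadratic fields considered here it is a constant) *)
Definition dder2 (f : pt -> R) (a b : pt) : R :=
  Derive (fun s => Derive (fun u =>
     f (vadd (vscal u b) (vscal s a))) 0) 0.

Definition Dop (u a b : pt) (q : pt -> pt) : R :=
  fst u * dder2 (fun x => fst (q x)) a b + snd u * dder2 (fun x => snd (q x)) a b.

(* D^{jl}_{i,k}: i=1 -> t_k . , i=2 -> n_k . ; j,l = 1 -> t_k, 2 -> n_k *)
Definition tn (z1 z2 z3 : pt) (i k : nat) : pt :=
  if Nat.eqb i 1 then etan z1 z2 z3 k else enrm z1 z2 z3 k.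
Definition Dcal (z1 z2 z3 : pt) (i j l k : nat) (q : pt -> pt) : R :=
  Dop (tn z1 z2 z3 i k) (tn z1 z2 z3 j k) (tn z1 z2 z3 l k) q.

(* coefficients alpha^i_{jl,k}; d = diameter of circumscribed circle *)
Definition alpha (z1 z2 z3 : pt) (d : R) (i j l k : nat) : R :=
  let lk := elen z1 z2 z3 k in
  let lm := elen z1 z2 z3 (k + 2) in  (* l_{k-1} *)
  let lp := elen z1 z2 z3 (k + 1) in
  let a111 := lm * lp * (3 * lk ^ 4 - (lm ^ 2 - lp ^ 2) ^ 2) / (24 * d * lk ^ 2) in
  let a112 := lm ^ 2 * lp ^ 2 * (lm ^ 2 - lp ^ 2) / (12 * d ^ 2 * lk) in
  let a122 := - (lp ^ 3 * lm ^ 3 / (6 * d ^ 3)) in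
  let a211 := (lm ^ 2 - lp ^ 2) * (9 * lk ^ 4 - (lm ^ 2 - lp ^ 2) ^ 2) / (48 * lk ^ 3) in
  match i, j, l with
  | 1, 1, 1 => a111
  | 1, 1, 2 | 1, 2, 1 => a112
  | 1, 2, 2 => a122
  | 2, 1, 1 => a211
  | 2, 1, 2 | 2, 2, 1 => - a111
  | _, _, _ => - a112
  end%nat.

Definition sum12 (f : nat -> R) : R := f 1%nat + f 2%nat.
Definition sum123 (f : nat -> R) : R := f 1%nat + f 2%nat + f 3%nat.

Definition wfun (z1 z2 z3 : pt) (d : R) (q : pt -> pt) (beta : nat) (x : pt) : R :=
  sum12 (fun i => sum12 (fun j => sum12 (fun l =>
     alpha z1 z2 z3 d i j l beta * Dcal z1 z2 z3 i j l beta q))) * psi0 z1 z2 z3 x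
  + sum123 (fun k => elen z1 z2 z3 k ^ 3 / 12 * Dcal z1 z2 z3 2 1 1 k q * psi z1 z2 z3 k x).

Definition gradperp (w : pt -> R) (x : pt) : pt :=
  (- Derive (fun s => w (fst x, s)) (snd x), Derive (fun s => w (s, snd x)) (fst x)).

(* Write p2 = (affine part) + Q with Q homogeneous quadratic, and let k be the vector with
   div Q = 3 k.x.  The cubic w combines the bubbles psi_0, psi_1, psi_2, psi_3, so curl w is a
   quadratic field whose RT_1 degrees of freedom all vanish: on e_k its normal component is the
   tangential derivative of w, and w vanishes at the vertices and restricts to e_k as a multiple
   of the odd bubble psi_k, so integrating by parts kills its moments against P_1; likewise
   int_T curl w = oint w t = 0.  With the coefficients of the lemma (where the circumdiameter is
   d = l_1 l_2 l_3 / (2|T|)) the quadratic part of curl w is exactly the divergence-free part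
   Q - (k.x) x of Q, so p2 - curl w lies in RT_1.  Since Pi_h^1 reproduces RT_1 and RT_1 is
   unisolvent for these degrees of freedom, p2 - Pi_h^1 p2 = curl w.  Every integral involved is
   of a polynomial of degree <= 3 on an edge or <= 2 on T, hence is computed exactly by Simpson's
   rule and by the edge-midpoint rule. *)

From Stdlib Require Import Reals Lra Lia.
From Coquelicot Require Import Coquelicot.
Open Scope R_scope.

Lemma RInt_quadratic (a b c h : R) :
  RInt (fun t => a + b * t + c * t ^ 2) 0 h = a * h + b * h ^ 2 / 2 + c * h ^ 3 / 3.
Proof.
apply is_RInt_unique.
set (F := fun t => a * t + b * t ^ 2 / 2 + c * t ^ 3 / 3).
replace (a * h + b * h ^ 2 / 2 + c * h ^ 3 / 3) with (minus (F h) (F 0))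
  by (unfold minus, plus, opp, F; simpl; field).
apply (@is_RInt_derive R_CompleteNormedModule F); intros t _.
- unfold F; auto_derive; auto; simpl; field.
- apply (@ex_derive_continuous R_AbsRing R_NormedModule); auto_derive; auto.
Qed.

Definition is_cubic (f : R -> R) : Prop :=
  exists a b c e : R, forall s, f s = a + b * s + c * s ^ 2 + e * s ^ 3.

Lemma RInt_cubic_Simpson (f : R -> R) :
  is_cubic f -> RInt f 0 1 = (f 0 + 4 * f (1 / 2) + f 1) / 6.
Proof.
intros [a [b [c [e Hf]]]].
rewrite (RInt_ext f (fun s => a + b * s + c * s ^ 2 + e * s ^ 3)) by (intros; apply Hf).
rewrite !Hf.
apply is_RInt_unique.
set (F := fun s => a * s + b * s ^ 2 / 2 + c * s ^ 3 / 3 + e * s ^ 4 / 4).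
match goal with |- is_RInt _ _ _ ?v => replace v with (minus (F 1) (F 0))
  by (unfold minus, plus, opp, F; simpl; field) end.
apply (@is_RInt_derive R_CompleteNormedModule F); intros s _.
- unfold F; auto_derive; auto; simpl; field.
- apply (@ex_derive_continuous R_AbsRing R_NormedModule); auto_derive; auto.
Qed.

Definition seg (A B : pt) (s : R) : pt := vadd A (vscal s (vsub B A)).

Definition simpson (A B : pt) (F : pt -> R) : R :=
  F (seg A B 0) + 4 * F (seg A B (1 / 2)) + F (seg A B 1).

Lemma is_cubic_P2_P1_seg (f v : pt -> R) (A B : pt) :
  is_P2 f -> is_P1 v -> is_cubic (fun s => f (seg A B s) * v (seg A B s)).
Proof.
intros [a [b [c [e [f' [g Hf]]]]]] [a' [b' [c' Hv]]].
destruct A as [A1 A2], B as [B1 B2].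
set (E1 := B1 - A1); set (E2 := B2 - A2).
set (f0 := a + b * A1 + c * A2 + e * A1 ^ 2 + f' * A1 * A2 + g * A2 ^ 2).
set (f1 := b * E1 + c * E2 + 2 * e * A1 * E1 + f' * (A1 * E2 + A2 * E1) + 2 * g * A2 * E2).
set (f2 := e * E1 ^ 2 + f' * E1 * E2 + g * E2 ^ 2).
set (v0 := a' + b' * A1 + c' * A2); set (v1 := b' * E1 + c' * E2).
exists (f0 * v0), (f0 * v1 + f1 * v0), (f1 * v1 + f2 * v0), (f2 * v1).
intros s; rewrite Hf, Hv; unfold seg, vadd, vscal, vsub; simpl.
unfold f0, f1, f2, v0, v1, E1, E2; ring.
Qed.

Lemma edge_int_Simpson (z1 z2 z3 : pt) (k : nat) (f v : pt -> R) :
  is_P2 f -> is_P1 v ->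
  edge_int z1 z2 z3 k (fun x => f x * v x) =
  elen z1 z2 z3 k / 6 *
    simpson (vtx z1 z2 z3 (k + 1)) (vtx z1 z2 z3 (k + 2)) (fun x => f x * v x).
Proof.
intros Hf Hv; unfold edge_int.
set (A := vtx z1 z2 z3 (k + 1)); set (B := vtx z1 z2 z3 (k + 2)).
rewrite (RInt_ext _ (fun s => f (seg A B s) * v (seg A B s))) by reflexivity.
rewrite (RInt_cubic_Simpson _ (is_cubic_P2_P1_seg f v A B Hf Hv)).
unfold simpson, seg; field.
Qed.

Definition midpt (a b : pt) : pt := vscal (1 / 2) (vadd a b).

Definition midsum (z1 z2 z3 : pt) (F : pt -> R) : R :=
  F (midpt z1 z2) + F (midpt z2 z3) + F (midpt z3 z1).

Lemma tri_int_midpoint (z1 z2 z3 : pt) (f : pt -> R) :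
  is_P2 f -> tri_int z1 z2 z3 f = area2 z1 z2 z3 / 6 * midsum z1 z2 z3 f.
Proof.
intros [a [b [c [e [f' [g Hf]]]]]].
destruct z1 as [P1 P2], z2 as [Q1 Q2], z3 as [R1 R2].
set (U1 := Q1 - P1); set (U2 := Q2 - P2); set (V1 := R1 - P1); set (V2 := R2 - P2).
set (c00 := a + b * P1 + c * P2 + e * P1 ^ 2 + f' * P1 * P2 + g * P2 ^ 2).
set (c10 := b * U1 + c * U2 + 2 * e * P1 * U1 + f' * (P1 * U2 + P2 * U1) + 2 * g * P2 * U2).
set (c01 := b * V1 + c * V2 + 2 * e * P1 * V1 + f' * (P1 * V2 + P2 * V1) + 2 * g * P2 * V2).
set (c20 := e * U1 ^ 2 + f' * U1 * U2 + g * U2 ^ 2).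
set (c02 := e * V1 ^ 2 + f' * V1 * V2 + g * V2 ^ 2).
set (c11 := 2 * e * U1 * V1 + f' * (U1 * V2 + U2 * V1) + 2 * g * U2 * V2).
assert (Hst : forall s t,
  f (vadd (P1, P2) (vadd (vscal s (vsub (Q1, Q2) (P1, P2))) (vscal t (vsub (R1, R2) (P1, P2))))) =
  (c00 + c10 * s + c20 * s ^ 2) + (c01 + c11 * s) * t + c02 * t ^ 2).
{ intros s t; rewrite Hf; unfold vadd, vscal, vsub; simpl.
  unfold c00, c10, c01, c20, c02, c11, U1, U2, V1, V2; ring. }
unfold tri_int.
rewrite (RInt_ext _ (fun s => (c00 + c10 * s + c20 * s ^ 2) * (1 - s)
  + (c01 + c11 * s) * (1 - s) ^ 2 / 2 + c02 * (1 - s) ^ 3 / 3)).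
2:{ intros s _.
  rewrite (RInt_ext _ (fun t => (c00 + c10 * s + c20 * s ^ 2) + (c01 + c11 * s) * t + c02 * t ^ 2)).
  - apply RInt_quadratic.
  - intros t _; apply (Hst s t). }
rewrite RInt_cubic_Simpson.
- unfold midsum, midpt, vadd, vscal; simpl; rewrite !Hf; simpl.
  unfold c00, c10, c01, c20, c02, c11, U1, U2, V1, V2; field.
- exists (c00 + c01 / 2 + c02 / 3), (c10 - c00 + (c11 - 2 * c01) / 2 - c02),
    (c20 - c10 + (c01 - 2 * c11) / 2 + c02), (- c20 + c11 / 2 - c02 / 3).
  intros s; field.
Qed.

Lemma is_P2_dot (q : pt -> pt) (n : pt) : is_P2vec q -> is_P2 (fun x => dot (q x) n).
Proof.
intros [[a1 [b1 [c1 [e1 [f1 [g1 H1]]]]]] [a2 [b2 [c2 [e2 [f2 [g2 H2]]]]]]].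
exists (fst n * a1 + snd n * a2), (fst n * b1 + snd n * b2), (fst n * c1 + snd n * c2),
  (fst n * e1 + snd n * e2), (fst n * f1 + snd n * f2), (fst n * g1 + snd n * g2).
intros x; unfold dot; rewrite H1, H2; ring.
Qed.

Lemma is_P2vec_sub (p q : pt -> pt) :
  is_P2vec p -> is_P2vec q -> is_P2vec (fun x => vsub (p x) (q x)).
Proof.
intros [[a1 [b1 [c1 [e1 [f1 [g1 Hp1]]]]]] [a2 [b2 [c2 [e2 [f2 [g2 Hp2]]]]]]]
  [[a1' [b1' [c1' [e1' [f1' [g1' Hq1]]]]]] [a2' [b2' [c2' [e2' [f2' [g2' Hq2]]]]]]].
split; simpl.
- exists (a1 - a1'), (b1 - b1'), (c1 - c1'), (e1 - e1'), (f1 - f1'), (g1 - g1').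
  intros x; rewrite Hp1, Hq1; ring.
- exists (a2 - a2'), (b2 - b2'), (c2 - c2'), (e2 - e2'), (f2 - f2'), (g2 - g2').
  intros x; rewrite Hp2, Hq2; ring.
Qed.

Definition rtform (a1 b1 c1 a2 b2 c2 k1 k2 : R) (x : pt) : pt :=
  (a1 + b1 * fst x + c1 * snd x + (k1 * fst x + k2 * snd x) * fst x,
   a2 + b2 * fst x + c2 * snd x + (k1 * fst x + k2 * snd x) * snd x).

Definition is_rtform (q : pt -> pt) : Prop :=
  exists a1 b1 c1 a2 b2 c2 k1 k2 : R, forall x, q x = rtform a1 b1 c1 a2 b2 c2 k1 k2 x.

Lemma in_RT1_rtform (r : pt -> pt) : in_RT1 r -> is_rtform r.
Proof.
intros [v1 [v2 [v3 [[a [b [c H1]]] [[a' [b' [c' H2]]] [[a'' [b'' [c'' H3]]] Hr]]]]]].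
exists a, (b + a''), c, a', b', (c' + a''), b'', c''.
intros x; rewrite Hr, H1, H2, H3; unfold rtform; f_equal; ring.
Qed.

Lemma is_rtform_P2vec (q : pt -> pt) : is_rtform q -> is_P2vec q.
Proof.
intros [a1 [b1 [c1 [a2 [b2 [c2 [k1 [k2 Hq]]]]]]]]; split.
- exists a1, b1, c1, k1, k2, 0; intros x; rewrite Hq; simpl; ring.
- exists a2, b2, c2, 0, k1, k2; intros x; rewrite Hq; simpl; ring.
Qed.

Lemma vec_eq0_of_dots (p a b : pt) :
  dot p a = 0 -> dot p b = 0 -> cross a b <> 0 -> p = (0, 0).
Proof.
destruct p as [p1 p2], a as [a1 a2], b as [b1 b2]; unfold dot, cross; simpl.
intros Ha Hb Hab.
assert (E1 : p1 * (a1 * b2 - a2 * b1) = 0)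
  by (transitivity (b2 * (p1 * a1 + p2 * a2) - a2 * (p1 * b1 + p2 * b2));
      [ring | rewrite Ha, Hb; ring]).
assert (E2 : p2 * (a1 * b2 - a2 * b1) = 0)
  by (transitivity (a1 * (p1 * b1 + p2 * b2) - b1 * (p1 * a1 + p2 * a2));
      [ring | rewrite Ha, Hb; ring]).
apply Rmult_integral in E1; apply Rmult_integral in E2.
destruct E1 as [E1 | E1]; [| contradiction]; destruct E2 as [E2 | E2]; [| contradiction].
now subst.
Qed.

Lemma is_P1_const (c : R) : is_P1 (fun _ => c).
Proof. exists c, 0, 0; intros; ring. Qed.

(* For n normal to [AB], q.n is affine along [AB] when q is in RT_1 (the term (k.x)(x.n) has
   x.n constant there), so its Simpson moments against 1 and against the hat function of B
   determine both end values. *)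
Lemma rtform_edge_moments_zero (A B n : pt) (q : pt -> pt) :
  is_rtform q -> dot (vsub B A) n = 0 -> 0 < dot (vsub B A) (vsub B A) ->
  (forall v, is_P1 v -> simpson A B (fun x => dot (q x) n * v x) = 0) ->
  dot (q A) n = 0 /\ dot (q B) n = 0.
Proof.
intros [a1 [b1 [c1 [a2 [b2 [c2 [k1 [k2 Hq]]]]]]]] Hn He Hmom.
set (L := dot (vsub B A) (vsub B A)).
set (hat := fun x => dot (vsub x A) (vsub B A) / L).
assert (Hhat : is_P1 hat).
{ exists (- dot A (vsub B A) / L), (fst (vsub B A) / L), (snd (vsub B A) / L).
  intros x; unfold hat, dot, vsub; simpl; field; unfold L; lra. }
assert (Hhat_seg : forall s, hat (seg A B s) = s).
{ intros s; unfold hat, L, seg, dot, vadd, vscal, vsub in *; simpl in *; field; lra. }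
set (phi := fun s => dot (q (seg A B s)) n).
assert (Hmid : phi (1 / 2) = (phi 0 + phi 1) / 2).
{ assert (E : phi (1 / 2) - (phi 0 + phi 1) / 2
    = - / 4 * (k1 * fst (vsub B A) + k2 * snd (vsub B A)) * dot (vsub B A) n).
  { unfold phi; rewrite !Hq; unfold rtform, seg, dot, vadd, vscal, vsub; simpl; field. }
  rewrite Hn in E; lra. }
pose proof (Hmom _ (is_P1_const 1)) as M1.
pose proof (Hmom _ Hhat) as Mhat.
unfold simpson in M1, Mhat; rewrite !Hhat_seg in Mhat; fold (phi 0) (phi (1/2)) (phi 1) in M1, Mhat.
assert (Hseg0 : seg A B 0 = A)
  by (unfold seg, vadd, vscal, vsub; destruct A, B; simpl; f_equal; ring).
assert (Hseg1 : seg A B 1 = B)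
  by (unfold seg, vadd, vscal, vsub; destruct A, B; simpl; f_equal; ring).
unfold phi in *; rewrite Hseg0, Hseg1 in *; split; lra.
Qed.

Definition edge (z1 z2 z3 : pt) (k : nat) : pt :=
  vsub (vtx z1 z2 z3 (k + 2)) (vtx z1 z2 z3 (k + 1)).
Definition rot (e : pt) : pt := (snd e, - fst e).

Lemma dot_self_pos_of_cross (a b : pt) : cross a b <> 0 -> 0 < dot a a.
Proof.
destruct a as [a1 a2], b as [b1 b2]; unfold cross, dot; simpl; intros H.
destruct (Rle_lt_dec (a1 * a1 + a2 * a2) 0) as [Hle | Hlt]; [exfalso | exact Hlt].
assert (a1 = 0) by nra; assert (a2 = 0) by nra; subst; apply H; ring.
Qed.

Lemma cross_vscal_rot (a b : R) (u w : pt) :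
  cross (vscal a (rot u)) (vscal b (rot w)) = a * b * cross u w.
Proof. unfold cross, vscal, rot; simpl; ring. Qed.

Section Triangle.
Variables z1 z2 z3 : pt.
Hypothesis Hccw : 0 < area2 z1 z2 z3.

Lemma area2_edge_cross (k : nat) : (1 <= k <= 3)%nat ->
  cross (edge z1 z2 z3 k) (edge z1 z2 z3 (S k)) = area2 z1 z2 z3.
Proof.
intros Hk; assert (Hk3 : (k = 1 \/ k = 2 \/ k = 3)%nat) by lia.
destruct Hk3 as [-> | [-> | ->]]; unfold edge, area2, vtx; simpl; unfold cross, vsub; simpl; ring.
Qed.

Lemma edge_cases (k : nat) :
  edge z1 z2 z3 k = edge z1 z2 z3 1 \/ edge z1 z2 z3 k = edge z1 z2 z3 2 \/
  edge z1 z2 z3 k = edge z1 z2 z3 3.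
Proof.
unfold edge, vtx; rewrite (Nat.Div0.add_mod k 2), (Nat.Div0.add_mod k 1).
pose proof (Nat.mod_upper_bound k 3 ltac:(lia)).
destruct (k mod 3) as [| [| [| m]]]; simpl; auto; lia.
Qed.

Lemma edge_dot_pos (k : nat) : 0 < dot (edge z1 z2 z3 k) (edge z1 z2 z3 k).
Proof.
assert (H : forall j, (1 <= j <= 3)%nat -> 0 < dot (edge z1 z2 z3 j) (edge z1 z2 z3 j)).
{ intros j Hj; apply (dot_self_pos_of_cross _ (edge z1 z2 z3 (S j))).
  rewrite area2_edge_cross by exact Hj; lra. }
destruct (edge_cases k) as [-> | [-> | ->]]; apply H; lia.
Qed.

Lemma elen_sq (k : nat) : elen z1 z2 z3 k ^ 2 = dot (edge z1 z2 z3 k) (edge z1 z2 z3 k).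
Proof.
unfold elen, vnorm; rewrite pow2_sqrt; [reflexivity |].
unfold dot; nra.
Qed.

Lemma elen_pos (k : nat) : 0 < elen z1 z2 z3 k.
Proof. apply sqrt_lt_R0, edge_dot_pos. Qed.

Lemma elen_prod_cyclic (k : nat) : (1 <= k <= 3)%nat ->
  elen z1 z2 z3 k * elen z1 z2 z3 (k + 1) * elen z1 z2 z3 (k + 2) =
  elen z1 z2 z3 1 * elen z1 z2 z3 2 * elen z1 z2 z3 3.
Proof.
intros Hk; assert (Hk3 : (k = 1 \/ k = 2 \/ k = 3)%nat) by lia.
destruct Hk3 as [-> | [-> | ->]]; [reflexivity | |].
- change (elen z1 z2 z3 (2 + 2)) with (elen z1 z2 z3 1); simpl; ring.
- change (elen z1 z2 z3 (3 + 1)) with (elen z1 z2 z3 1);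
    change (elen z1 z2 z3 (3 + 2)) with (elen z1 z2 z3 2); simpl; ring.
Qed.

Lemma enrm_eq (k : nat) : enrm z1 z2 z3 k = vscal (/ elen z1 z2 z3 k) (rot (edge z1 z2 z3 k)).
Proof. unfold enrm, etan, rot, edge, vscal; simpl; f_equal; ring. Qed.

Lemma dot_edge_enrm (k : nat) : dot (edge z1 z2 z3 k) (enrm z1 z2 z3 k) = 0.
Proof. rewrite enrm_eq; unfold dot, vscal, rot; simpl; ring. Qed.

Lemma cross_enrm (k : nat) : (1 <= k <= 3)%nat ->
  cross (enrm z1 z2 z3 k) (enrm z1 z2 z3 (S k)) <> 0.
Proof.
intros Hk; rewrite !enrm_eq, cross_vscal_rot, area2_edge_cross by exact Hk.
pose proof (elen_pos k); pose proof (elen_pos (S k)).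
apply Rmult_integral_contrapositive; split; [| lra].
apply Rmult_integral_contrapositive; split; apply Rinv_neq_0_compat; lra.
Qed.

Lemma affine_lam_interp (a b c : R) (x : pt) :
  a + b * fst x + c * snd x =
  lam z1 z2 z3 1 x * (a + b * fst z1 + c * snd z1)
  + lam z1 z2 z3 2 x * (a + b * fst z2 + c * snd z2)
  + lam z1 z2 z3 3 x * (a + b * fst z3 + c * snd z3).
Proof.
unfold lam, vtx; simpl.
unfold area2 in *; destruct z1, z2, z3; unfold cross, vsub in *; simpl in *; field; lra.
Qed.

End Triangle.

Lemma rtform_midsum (z1 z2 z3 : pt) (q : pt -> pt) (a1 b1 c1 a2 b2 c2 k1 k2 : R) :
  (forall x, q x = rtform a1 b1 c1 a2 b2 c2 k1 k2 x) ->
  let k := (k1, k2) in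
  k1 * midsum z1 z2 z3 (fun x => fst (q x)) + k2 * midsum z1 z2 z3 (fun x => snd (q x)) =
  k1 * (fst (q z1) + fst (q z2) + fst (q z3)) + k2 * (snd (q z1) + snd (q z2) + snd (q z3))
  - / 4 * (dot k (vsub z2 z1) ^ 2 + dot k (vsub z3 z2) ^ 2 + dot k (vsub z1 z3) ^ 2).
Proof.
intros Hq k; unfold midsum; rewrite !Hq.
destruct z1, z2, z3; unfold k, midpt, rtform, dot, vadd, vscal, vsub; simpl; field.
Qed.

Definition RT1_dofs_zero (z1 z2 z3 : pt) (q : pt -> pt) : Prop :=
  (forall k : nat, (1 <= k <= 3)%nat -> forall v, is_P1 v ->
     simpson (vtx z1 z2 z3 (k + 1)) (vtx z1 z2 z3 (k + 2))
       (fun x => dot (q x) (enrm z1 z2 z3 k) * v x) = 0) /\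
  midsum z1 z2 z3 (fun x => fst (q x)) = 0 /\ midsum z1 z2 z3 (fun x => snd (q x)) = 0.

Lemma RT1_dofs_zero_sub (z1 z2 z3 : pt) (p q : pt -> pt) :
  RT1_dofs_zero z1 z2 z3 p -> RT1_dofs_zero z1 z2 z3 q ->
  RT1_dofs_zero z1 z2 z3 (fun x => vsub (p x) (q x)).
Proof.
intros [Ep [Mp1 Mp2]] [Eq [Mq1 Mq2]]; repeat split.
- intros k Hk v Hv; pose proof (Ep k Hk v Hv) as E1; pose proof (Eq k Hk v Hv) as E2.
  unfold simpson in *; unfold dot, vsub in *; simpl in *; lra.
- unfold midsum, vsub in *; simpl in *; lra.
- unfold midsum, vsub in *; simpl in *; lra.
Qed.

Lemma rtform_vertices_zero (z1 z2 z3 : pt) (q : pt -> pt) :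
  0 < area2 z1 z2 z3 -> is_rtform q -> RT1_dofs_zero z1 z2 z3 q ->
  q z1 = (0, 0) /\ q z2 = (0, 0) /\ q z3 = (0, 0).
Proof.
intros HA Hq [Hedge _].
assert (Hnormal : forall k, (1 <= k <= 3)%nat ->
  dot (q (vtx z1 z2 z3 (k + 1))) (enrm z1 z2 z3 k) = 0 /\
  dot (q (vtx z1 z2 z3 (k + 2))) (enrm z1 z2 z3 k) = 0).
{ intros k Hk; apply rtform_edge_moments_zero; auto.
  - apply dot_edge_enrm.
  - apply edge_dot_pos, HA. }
destruct (Hnormal 1%nat ltac:(lia)) as [N12 N13].
destruct (Hnormal 2%nat ltac:(lia)) as [N23 N21].
destruct (Hnormal 3%nat ltac:(lia)) as [N31 N32].
cbn [Nat.add] in *.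
change (vtx z1 z2 z3 2) with z2 in *; change (vtx z1 z2 z3 3) with z3 in *;
change (vtx z1 z2 z3 4) with z1 in *; change (vtx z1 z2 z3 5) with z2 in *.
repeat split.
- apply (vec_eq0_of_dots _ _ _ N21 N31), cross_enrm; auto; lia.
- apply (vec_eq0_of_dots _ _ _ N32 N12).
  change (enrm z1 z2 z3 1) with (enrm z1 z2 z3 4); apply cross_enrm; auto; lia.
- apply (vec_eq0_of_dots _ _ _ N13 N23), cross_enrm; auto; lia.
Qed.

Lemma rtform_unisolvent (z1 z2 z3 : pt) (q : pt -> pt) :
  0 < area2 z1 z2 z3 -> is_rtform q -> RT1_dofs_zero z1 z2 z3 q -> forall x, q x = (0, 0).
Proof.
intros HA Hq Hdofs.
destruct (rtform_vertices_zero z1 z2 z3 q HA Hq Hdofs) as [Q1 [Q2 Q3]].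
destruct Hdofs as [_ [M1 M2]].
destruct Hq as [a1 [b1 [c1 [a2 [b2 [c2 [k1 [k2 Hq]]]]]]]].
pose proof (rtform_midsum z1 z2 z3 q _ _ _ _ _ _ _ _ Hq) as E; cbv zeta in E.
rewrite M1, M2, Q1, Q2, Q3 in E; simpl in E.
assert (D1 : dot (k1, k2) (vsub z2 z1) = 0) by nra.
assert (D2 : dot (k1, k2) (vsub z3 z2) = 0) by nra.
assert (Hk : (k1, k2) = (0, 0)).
{ apply (vec_eq0_of_dots _ _ _ D1 D2).
  replace (cross (vsub z2 z1) (vsub z3 z2)) with (area2 z1 z2 z3)
    by (unfold area2, cross, vsub; simpl; ring); lra. }
injection Hk as -> ->.
assert (Haff : forall y, q y = (a1 + b1 * fst y + c1 * snd y, a2 + b2 * fst y + c2 * snd y))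
  by (intros y; rewrite Hq; unfold rtform; f_equal; ring).
rewrite Haff in Q1, Q2, Q3.
injection Q1 as Q11 Q12; injection Q2 as Q21 Q22; injection Q3 as Q31 Q32.
intros x; rewrite Haff, (affine_lam_interp z1 z2 z3 HA a1 b1 c1),
  (affine_lam_interp z1 z2 z3 HA a2 b2 c2).
rewrite Q11, Q12, Q21, Q22, Q31, Q32; f_equal; ring.
Qed.

Lemma Pi1_dofs_zero (z1 z2 z3 : pt) (p r : pt -> pt) :
  0 < area2 z1 z2 z3 -> is_P2vec p -> is_rtform r -> is_Pi1 z1 z2 z3 p r ->
  RT1_dofs_zero z1 z2 z3 (fun x => vsub (p x) (r x)).
Proof.
intros HA Hp Hr [_ [Hedge [T1 T2]]].
destruct (is_P2vec_sub p r Hp (is_rtform_P2vec r Hr)) as [Hpr1 Hpr2].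
repeat split.
- intros k Hk v Hv; pose proof (Hedge k Hk v Hv) as E.
  rewrite (edge_int_Simpson z1 z2 z3 k (fun x => dot (vsub (p x) (r x)) (enrm z1 z2 z3 k)) v)
    in E by (auto; apply is_P2_dot, is_P2vec_sub; auto; apply is_rtform_P2vec; auto).
  pose proof (elen_pos z1 z2 z3 HA k).
  apply Rmult_integral in E; destruct E as [E | E]; [lra | exact E].
- rewrite (tri_int_midpoint z1 z2 z3 (fun x => fst (p x) - fst (r x)) Hpr1) in T1.
  apply Rmult_integral in T1; destruct T1 as [T1 | T1]; [lra | exact T1].
- rewrite (tri_int_midpoint z1 z2 z3 (fun x => snd (p x) - snd (r x)) Hpr2) in T2.
  apply Rmult_integral in T2; destruct T2 as [T2 | T2]; [lra | exact T2].
Qed.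

Lemma circumcenter_identity (u v c : pt) (rho : R) :
  dot c c = rho -> dot (vsub u c) (vsub u c) = rho -> dot (vsub v c) (vsub v c) = rho ->
  4 * rho * cross u v ^ 2 = dot u u * dot v v * dot (vsub u v) (vsub u v).
Proof.
destruct u as [u1 u2], v as [v1 v2], c as [c1 c2]; unfold dot, cross, vsub; simpl.
intros Hc Hu Hv.
assert (Hcu : c1 * u1 + c2 * u2 = (u1 * u1 + u2 * u2) / 2) by lra.
assert (Hcv : c1 * v1 + c2 * v2 = (v1 * v1 + v2 * v2) / 2) by lra.
assert (C1 : c1 * (u1 * v2 - u2 * v1) = ((u1 * u1 + u2 * u2) * v2 - (v1 * v1 + v2 * v2) * u2) / 2).
{ transitivity (v2 * (c1 * u1 + c2 * u2) - u2 * (c1 * v1 + c2 * v2)); [ring |].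
  rewrite Hcu, Hcv; field. }
assert (C2 : c2 * (u1 * v2 - u2 * v1) = ((v1 * v1 + v2 * v2) * u1 - (u1 * u1 + u2 * u2) * v1) / 2).
{ transitivity (u1 * (c1 * v1 + c2 * v2) - v1 * (c1 * u1 + c2 * u2)); [ring |].
  rewrite Hcu, Hcv; field. }
rewrite <- Hc.
transitivity (4 * ((c1 * (u1 * v2 - u2 * v1)) ^ 2 + (c2 * (u1 * v2 - u2 * v1)) ^ 2)); [ring |].
rewrite C1, C2; field.
Qed.

Lemma dot_vsub_sym (a b : pt) : dot (vsub a b) (vsub a b) = dot (vsub b a) (vsub b a).
Proof. unfold dot, vsub; simpl; ring. Qed.

Lemma circumradius_area (z1 z2 z3 c : pt) (rho : R) :
  dot (vsub z1 c) (vsub z1 c) = rho -> dot (vsub z2 c) (vsub z2 c) = rho ->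
  dot (vsub z3 c) (vsub z3 c) = rho ->
  4 * rho * area2 z1 z2 z3 ^ 2 = elen z1 z2 z3 1 ^ 2 * elen z1 z2 z3 2 ^ 2 * elen z1 z2 z3 3 ^ 2.
Proof.
intros H1 H2 H3; rewrite !elen_sq.
assert (Htr : forall a b, vsub (vsub a z1) (vsub b z1) = vsub a b)
  by (intros; unfold vsub; simpl; f_equal; ring).
pose proof (circumcenter_identity (vsub z2 z1) (vsub z3 z1) (vsub c z1) rho) as E.
rewrite !Htr, (dot_vsub_sym c z1) in E; specialize (E H1 H2 H3).
change (edge z1 z2 z3 1) with (vsub z3 z2); change (edge z1 z2 z3 2) with (vsub z1 z3);
  change (edge z1 z2 z3 3) with (vsub z2 z1).
unfold area2; rewrite E, (dot_vsub_sym z3 z2), (dot_vsub_sym z1 z3); ring.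
Qed.

Lemma circumdiameter (z1 z2 z3 c : pt) (d : R) : 0 < area2 z1 z2 z3 ->
  (forall k : nat, (1 <= k <= 3)%nat -> vnorm (vsub (vtx z1 z2 z3 k) c) = d / 2) ->
  d = elen z1 z2 z3 1 * elen z1 z2 z3 2 * elen z1 z2 z3 3 / area2 z1 z2 z3.
Proof.
intros HA Hc.
assert (Hsq : forall k, (1 <= k <= 3)%nat ->
  dot (vsub (vtx z1 z2 z3 k) c) (vsub (vtx z1 z2 z3 k) c) = (d / 2) ^ 2).
{ intros k Hk; rewrite <- (Hc k Hk); unfold vnorm; rewrite pow2_sqrt; [reflexivity |].
  unfold dot; nra. }
pose proof (circumradius_area z1 z2 z3 c _ (Hsq 1%nat ltac:(lia)) (Hsq 2%nat ltac:(lia))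
  (Hsq 3%nat ltac:(lia))) as E.
assert (Hd : 0 <= d).
{ pose proof (Hc 1%nat ltac:(lia)) as H1; change (vtx z1 z2 z3 1) with z1 in H1; unfold vnorm in H1.
  pose proof (sqrt_pos (dot (vsub z1 c) (vsub z1 c))); lra. }
assert (Hl : forall k, 0 <= elen z1 z2 z3 k) by (intros; apply sqrt_pos).
assert (Hprod : d * area2 z1 z2 z3 = elen z1 z2 z3 1 * elen z1 z2 z3 2 * elen z1 z2 z3 3).
{ apply Rsqr_inj; [apply Rmult_le_pos; lra | repeat apply Rmult_le_pos; auto |].
  unfold Rsqr; simpl in E; lra. }
rewrite <- Hprod; field; lra.
Qed.

Definition aff (c : R) (g x : pt) : R := c + dot g x.

Definition cubic_bubble (K0 K1 K2 K3 a1 a2 a3 : R) : R :=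
  K0 * (a1 * a2 * a3) + K1 * (a3 * a2 * (a3 - a2)) + K2 * (a1 * a3 * (a1 - a3))
  + K3 * (a2 * a1 * (a2 - a1)).

Definition cubic_bubble_deriv (K0 K1 K2 K3 a1 a2 a3 d1 d2 d3 : R) : R :=
  K0 * (d1 * a2 * a3 + a1 * d2 * a3 + a1 * a2 * d3)
  + K1 * (d3 * a2 * (a3 - a2) + a3 * d2 * (a3 - a2) + a3 * a2 * (d3 - d2))
  + K2 * (d1 * a3 * (a1 - a3) + a1 * d3 * (a1 - a3) + a1 * a3 * (d1 - d3))
  + K3 * (d2 * a1 * (a2 - a1) + a2 * d1 * (a2 - a1) + a2 * a1 * (d2 - d1)).

Definition curl_bubble (c1 c2 c3 : R) (g1 g2 g3 : pt) (K0 K1 K2 K3 : R) (x : pt) : pt :=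
  let a1 := aff c1 g1 x in let a2 := aff c2 g2 x in let a3 := aff c3 g3 x in
  (- cubic_bubble_deriv K0 K1 K2 K3 a1 a2 a3 (snd g1) (snd g2) (snd g3),
   cubic_bubble_deriv K0 K1 K2 K3 a1 a2 a3 (fst g1) (fst g2) (fst g3)).

Lemma gradperp_ext (f g : pt -> R) (x : pt) :
  (forall y, f y = g y) -> gradperp f x = gradperp g x.
Proof.
intros H; unfold gradperp.
rewrite (Derive_ext (fun s => f (fst x, s)) (fun s => g (fst x, s))) by auto.
rewrite (Derive_ext (fun s => f (s, snd x)) (fun s => g (s, snd x))) by auto.
reflexivity.
Qed.

Lemma gradperp_cubic_bubble (c1 c2 c3 : R) (g1 g2 g3 : pt) (K0 K1 K2 K3 : R) (x : pt) :
  gradperp (fun y => cubic_bubble K0 K1 K2 K3 (aff c1 g1 y) (aff c2 g2 y) (aff c3 g3 y)) x =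
  curl_bubble c1 c2 c3 g1 g2 g3 K0 K1 K2 K3 x.
Proof.
destruct x as [X Y]; unfold gradperp, curl_bubble; simpl.
f_equal; [f_equal |]; apply is_derive_unique;
  unfold cubic_bubble, cubic_bubble_deriv, aff, dot; simpl; auto_derive; auto; ring.
Qed.

Lemma curl_bubble_rotate (c1 c2 c3 : R) (g1 g2 g3 : pt) (K0 K1 K2 K3 : R) (x : pt) :
  curl_bubble c1 c2 c3 g1 g2 g3 K0 K1 K2 K3 x = curl_bubble c2 c3 c1 g2 g3 g1 K0 K2 K3 K1 x.
Proof. unfold curl_bubble, cubic_bubble_deriv; f_equal; ring. Qed.

Section Bubble.
Variables z1 z2 z3 : pt.
Hypothesis Hccw : 0 < area2 z1 z2 z3.

Definition lam_const (k : nat) : R :=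
  cross (vtx z1 z2 z3 (k + 1)) (vtx z1 z2 z3 (k + 2)) / area2 z1 z2 z3.
Definition grad_lam (k : nat) : pt := vscal (- / area2 z1 z2 z3) (rot (edge z1 z2 z3 k)).

Lemma lam_aff (k : nat) (x : pt) : lam z1 z2 z3 k x = aff (lam_const k) (grad_lam k) x.
Proof.
unfold lam, lam_const, grad_lam, aff, edge, rot, cross, dot, vscal, vsub; simpl; field; lra.
Qed.

Definition curl_W (K0 K1 K2 K3 : R) : pt -> pt :=
  curl_bubble (lam_const 1) (lam_const 2) (lam_const 3) (grad_lam 1) (grad_lam 2) (grad_lam 3)
    K0 K1 K2 K3.

Lemma gradperp_lam_bubble (K0 K1 K2 K3 : R) (x : pt) :
  gradperp (fun y =>
    cubic_bubble K0 K1 K2 K3 (lam z1 z2 z3 1 y) (lam z1 z2 z3 2 y) (lam z1 z2 z3 3 y)) x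
  = curl_W K0 K1 K2 K3 x.
Proof.
rewrite (gradperp_ext _ _ x (fun y => f_equal3 (cubic_bubble K0 K1 K2 K3)
  (lam_aff 1 y) (lam_aff 2 y) (lam_aff 3 y))).
apply gradperp_cubic_bubble.
Qed.

Lemma curl_W_dofs_zero (K0 K1 K2 K3 : R) : RT1_dofs_zero z1 z2 z3 (curl_W K0 K1 K2 K3).
Proof.
split; [| split].
2, 3: unfold midsum, midpt, curl_W, curl_bubble, cubic_bubble_deriv, lam_const, grad_lam, aff,
        edge, rot, area2 in *;
      destruct z1 as [x1 y1], z2 as [x2 y2], z3 as [x3 y3];
      unfold vtx, dot, cross, vadd, vscal, vsub in *; simpl in *; field; lra.
intros k Hk v [a [b [c Hv]]].
pose proof (elen_pos z1 z2 z3 Hccw k) as HL.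
unfold simpson; rewrite !Hv, enrm_eq.
generalize dependent (elen z1 z2 z3 k); intros L HL.
assert (Hk3 : (k = 1 \/ k = 2 \/ k = 3)%nat) by lia.
unfold curl_W, curl_bubble, cubic_bubble_deriv, lam_const, grad_lam, aff, edge, rot, seg,
  area2 in *.
destruct z1 as [x1 y1], z2 as [x2 y2], z3 as [x3 y3].
destruct Hk3 as [-> | [-> | ->]]; unfold vtx, dot, cross, vadd, vscal, vsub in *; simpl in *;
  field; split; lra.
Qed.

End Bubble.

Definition P2_coeffs (F : pt -> R) (a b c e f g : R) : Prop :=
  forall x, F x = a + b * fst x + c * snd x + e * fst x ^ 2 + f * fst x * snd x + g * snd x ^ 2.

Definition hess (e f g : R) (a b : pt) : R :=
  2 * e * fst a * fst b + f * (fst a * snd b + snd a * fst b) + 2 * g * snd a * snd b.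

Lemma dder2_P2 {F : pt -> R} {a b c e f g : R} :
  P2_coeffs F a b c e f g -> forall u w, dder2 F u w = hess e f g u w.
Proof.
intros HF u w; unfold dder2.
rewrite (Derive_ext (fun s => Derive (fun t => F (vadd (vscal t w) (vscal s u))) 0)
  (fun s => b * fst w + c * snd w + 2 * e * s * fst u * fst w
     + f * s * (fst u * snd w + snd u * fst w) + 2 * g * s * snd u * snd w)).
- apply is_derive_unique; unfold hess; auto_derive; auto; ring.
- intros s; apply is_derive_unique.
  apply (is_derive_ext (fun t => a + b * (t * fst w + s * fst u) + c * (t * snd w + s * snd u)
     + e * (t * fst w + s * fst u) ^ 2 + f * (t * fst w + s * fst u) * (t * snd w + s * snd u)
     + g * (t * snd w + s * snd u) ^ 2)).
  + intros t; rewrite HF; reflexivity.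
  + auto_derive; auto; ring.
Qed.

Definition quad_part (e1 f1 g1 e2 f2 g2 : R) (x : pt) : pt :=
  (e1 * fst x ^ 2 + f1 * fst x * snd x + g1 * snd x ^ 2,
   e2 * fst x ^ 2 + f2 * fst x * snd x + g2 * snd x ^ 2).

(* u . d_a d_b Q for a homogeneous quadratic field Q, by polarization *)
Definition D2 (Q : pt -> pt) (u a b : pt) : R := dot u (vsub (Q (vadd a b)) (vadd (Q a) (Q b))).

Lemma Dop_P2 {p : pt -> pt} {a1 b1 c1 e1 f1 g1 a2 b2 c2 e2 f2 g2 : R} :
  P2_coeffs (fun x => fst (p x)) a1 b1 c1 e1 f1 g1 ->
  P2_coeffs (fun x => snd (p x)) a2 b2 c2 e2 f2 g2 ->
  forall u a b, Dop u a b p = D2 (quad_part e1 f1 g1 e2 f2 g2) u a b.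
Proof.
intros H1 H2 u a b; unfold Dop; rewrite (dder2_P2 H1), (dder2_P2 H2).
unfold D2, hess, quad_part, dot, vadd, vsub; simpl; ring.
Qed.

Definition edge_coef (Q : pt -> pt) (e : pt) : R := D2 Q (rot e) e e / 12.

(* The paper's sum of alpha^i_{jl,k} D^{jl}_{i,k}, after substituting d = l_1 l_2 l_3 / (2|T|),
   t_k = e / l_k and n_k = rot e / l_k, with e = z_{k-1} - z_{k+1}, S = l_k^2,
   Sm = l_{k-1}^2 and Sp = l_{k+1}^2. *)
Definition center_coef (Q : pt -> pt) (A : R) (e : pt) (Sm Sp : R) : R :=
  let m := rot e in let S := dot e e in let D := D2 Q in
  (A * (3 * S ^ 2 - (Sm - Sp) ^ 2) * (D e e e - D m e m - D m m e) / 24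
   + A ^ 2 * (Sm - Sp) * (D e e m + D e m e - D m m m) / 12 - A ^ 3 * D e m m / 6
   + (Sm - Sp) * (9 * S ^ 2 - (Sm - Sp) ^ 2) * D m e e / 48) / S ^ 3.

Lemma edge_coef_eq (z1 z2 z3 : pt) {p : pt -> pt} {a1 b1 c1 e1 f1 g1 a2 b2 c2 e2 f2 g2 : R} :
  P2_coeffs (fun x => fst (p x)) a1 b1 c1 e1 f1 g1 ->
  P2_coeffs (fun x => snd (p x)) a2 b2 c2 e2 f2 g2 ->
  forall k, 0 < elen z1 z2 z3 k ->
  elen z1 z2 z3 k ^ 3 / 12 * Dcal z1 z2 z3 2 1 1 k p
  = edge_coef (quad_part e1 f1 g1 e2 f2 g2) (edge z1 z2 z3 k).
Proof.
intros Hp1 Hp2 k HL; unfold Dcal, tn; simpl Nat.eqb; cbv iota.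
rewrite (Dop_P2 Hp1 Hp2), enrm_eq.
change (etan z1 z2 z3 k) with (vscal (/ elen z1 z2 z3 k) (edge z1 z2 z3 k)).
generalize dependent (elen z1 z2 z3 k); intros L HL; destruct (edge z1 z2 z3 k) as [u1 u2].
unfold edge_coef, D2, quad_part, rot, dot, vadd, vscal, vsub; simpl; field; lra.
Qed.

Lemma alpha_sum_center_coef (z1 z2 z3 : pt) {p : pt -> pt}
    {a1 b1 c1 e1 f1 g1 a2 b2 c2 e2 f2 g2 : R} :
  P2_coeffs (fun x => fst (p x)) a1 b1 c1 e1 f1 g1 ->
  P2_coeffs (fun x => snd (p x)) a2 b2 c2 e2 f2 g2 ->
  forall k d, area2 z1 z2 z3 <> 0 ->
  0 < elen z1 z2 z3 k -> 0 < elen z1 z2 z3 (k + 1) -> 0 < elen z1 z2 z3 (k + 2) ->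
  d = elen z1 z2 z3 k * elen z1 z2 z3 (k + 1) * elen z1 z2 z3 (k + 2) / area2 z1 z2 z3 ->
  sum12 (fun i => sum12 (fun j => sum12 (fun l =>
    alpha z1 z2 z3 d i j l k * Dcal z1 z2 z3 i j l k p)))
  = center_coef (quad_part e1 f1 g1 e2 f2 g2) (area2 z1 z2 z3) (edge z1 z2 z3 k)
      (elen z1 z2 z3 (k + 2) ^ 2) (elen z1 z2 z3 (k + 1) ^ 2).
Proof.
intros Hp1 Hp2 k d HA Hk Hp Hm ->.
unfold sum12; cbv beta iota zeta delta [alpha Dcal tn Nat.eqb].
rewrite !(Dop_P2 Hp1 Hp2), !enrm_eq.
change (etan z1 z2 z3 k) with (vscal (/ elen z1 z2 z3 k) (edge z1 z2 z3 k)).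
unfold center_coef; rewrite <- (elen_sq z1 z2 z3 k).
generalize dependent (elen z1 z2 z3 k); generalize dependent (elen z1 z2 z3 (k + 1));
  generalize dependent (elen z1 z2 z3 (k + 2)); intros Lm Hm Lp Hp Lk Hk.
destruct (edge z1 z2 z3 k) as [u1 u2].
unfold D2, quad_part, rot, dot, vadd, vscal, vsub; simpl.
field; repeat split; lra.
Qed.

(* div Q = 3 k.x = div ((k.x) x), so Q x - (k.x) x is the divergence-free part of Q. *)
Definition rt_vec (e1 f1 g1 e2 f2 g2 : R) : pt := ((2 * e1 + f2) / 3, (f1 + 2 * g2) / 3).

Lemma area2_rotate (z1 z2 z3 : pt) : area2 z2 z3 z1 = area2 z1 z2 z3.
Proof. unfold area2, cross, vsub; simpl; ring. Qed.

Lemma quadratic_part_curl_bubble_1 (z1 z2 z3 : pt) (e1 f1 g1 e2 f2 g2 : R) (x : pt) :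
  area2 z1 z2 z3 <> 0 -> dot (edge z1 z2 z3 1) (edge z1 z2 z3 1) <> 0 ->
  let Q := quad_part e1 f1 g1 e2 f2 g2 in
  let E := edge z1 z2 z3 in
  curl_bubble 0 0 0 (grad_lam z1 z2 z3 1) (grad_lam z1 z2 z3 2) (grad_lam z1 z2 z3 3)
    (center_coef Q (area2 z1 z2 z3) (E 1%nat) (dot (E 3%nat) (E 3%nat)) (dot (E 2%nat) (E 2%nat)))
    (edge_coef Q (E 1%nat)) (edge_coef Q (E 2%nat)) (edge_coef Q (E 3%nat)) x
  = vsub (Q x) (vscal (dot (rt_vec e1 f1 g1 e2 f2 g2) x) x).
Proof.
intros HA HE Q E; unfold Q, E in *.
unfold curl_bubble, cubic_bubble_deriv, center_coef, edge_coef, grad_lam, D2, rt_vec, quad_part,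
  area2, edge, aff, vtx in *; simpl in *.
destruct z1 as [x1 y1], z2 as [x2 y2], z3 as [x3 y3], x as [X Y];
  unfold rot, dot, cross, vscal, vadd, vsub in *; simpl in *.
f_equal; field; auto.
Qed.

Lemma vtx_rotate (z1 z2 z3 : pt) (n : nat) : vtx z2 z3 z1 n = vtx z1 z2 z3 (S n).
Proof.
unfold vtx; replace (S n) with (n + 1)%nat by lia; rewrite Nat.Div0.add_mod.
pose proof (Nat.mod_upper_bound n 3 ltac:(lia)).
destruct (n mod 3) as [| [| [| m]]]; simpl; auto; lia.
Qed.

Lemma edge_rotate (z1 z2 z3 : pt) (k : nat) : edge z2 z3 z1 k = edge z1 z2 z3 (S k).
Proof. unfold edge; rewrite !(vtx_rotate z1 z2 z3); reflexivity. Qed.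

Lemma grad_lam_rotate (z1 z2 z3 : pt) (k : nat) : grad_lam z2 z3 z1 k = grad_lam z1 z2 z3 (S k).
Proof. unfold grad_lam; rewrite area2_rotate, edge_rotate; reflexivity. Qed.

Lemma quadratic_part_curl_bubble (z1 z2 z3 : pt) (e1 f1 g1 e2 f2 g2 : R) (k : nat) (x : pt) :
  (1 <= k <= 3)%nat -> area2 z1 z2 z3 <> 0 -> dot (edge z1 z2 z3 k) (edge z1 z2 z3 k) <> 0 ->
  let Q := quad_part e1 f1 g1 e2 f2 g2 in
  let E := edge z1 z2 z3 in
  curl_bubble 0 0 0 (grad_lam z1 z2 z3 1) (grad_lam z1 z2 z3 2) (grad_lam z1 z2 z3 3)
    (center_coef Q (area2 z1 z2 z3) (E k) (dot (E (k + 2)%nat) (E (k + 2)%nat))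
       (dot (E (k + 1)%nat) (E (k + 1)%nat)))
    (edge_coef Q (E 1%nat)) (edge_coef Q (E 2%nat)) (edge_coef Q (E 3%nat)) x
  = vsub (Q x) (vscal (dot (rt_vec e1 f1 g1 e2 f2 g2) x) x).
Proof.
intros Hk HA HE Q E.
assert (Hk3 : (k = 1 \/ k = 2 \/ k = 3)%nat) by lia; destruct Hk3 as [-> | [-> | ->]].
- exact (quadratic_part_curl_bubble_1 z1 z2 z3 e1 f1 g1 e2 f2 g2 x HA HE).
- rewrite curl_bubble_rotate.
  pose proof (quadratic_part_curl_bubble_1 z2 z3 z1 e1 f1 g1 e2 f2 g2 x) as H.
  rewrite (area2_rotate z1 z2 z3), !(edge_rotate z1 z2 z3), !(grad_lam_rotate z1 z2 z3) in H.
  exact (H HA HE).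
- rewrite curl_bubble_rotate, curl_bubble_rotate.
  pose proof (quadratic_part_curl_bubble_1 z3 z1 z2 e1 f1 g1 e2 f2 g2 x) as H.
  rewrite (area2_rotate z2 z3 z1), (area2_rotate z1 z2 z3), !(edge_rotate z2 z3 z1),
    !(edge_rotate z1 z2 z3), !(grad_lam_rotate z2 z3 z1), !(grad_lam_rotate z1 z2 z3) in H.
  exact (H HA HE).
Qed.

Lemma curl_bubble_affine_remainder (l1 l2 l3 : R) (g1 g2 g3 : pt) (K0 K1 K2 K3 : R) :
  exists a1 b1 c1 a2 b2 c2 : R, forall x,
    curl_bubble l1 l2 l3 g1 g2 g3 K0 K1 K2 K3 x =
    vadd (curl_bubble 0 0 0 g1 g2 g3 K0 K1 K2 K3 x)
      (a1 + b1 * fst x + c1 * snd x, a2 + b2 * fst x + c2 * snd x).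
Proof.
set (D := fun x => vsub (curl_bubble l1 l2 l3 g1 g2 g3 K0 K1 K2 K3 x)
                        (curl_bubble 0 0 0 g1 g2 g3 K0 K1 K2 K3 x)).
exists (fst (D (0, 0))), (fst (D (1, 0)) - fst (D (0, 0))), (fst (D (0, 1)) - fst (D (0, 0))),
  (snd (D (0, 0))), (snd (D (1, 0)) - snd (D (0, 0))), (snd (D (0, 1)) - snd (D (0, 0))).
intros [X Y]; unfold D, curl_bubble, cubic_bubble_deriv, aff, dot, vadd, vsub; simpl.
f_equal; ring.
Qed.

Lemma rtform_sub_curl_bubble {p : pt -> pt} {a1 b1 c1 e1 f1 g1 a2 b2 c2 e2 f2 g2 : R}
    (l1 l2 l3 : R) (h1 h2 h3 : pt) (K0 K1 K2 K3 : R) :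
  P2_coeffs (fun x => fst (p x)) a1 b1 c1 e1 f1 g1 ->
  P2_coeffs (fun x => snd (p x)) a2 b2 c2 e2 f2 g2 ->
  (forall x, curl_bubble 0 0 0 h1 h2 h3 K0 K1 K2 K3 x =
     vsub (quad_part e1 f1 g1 e2 f2 g2 x) (vscal (dot (rt_vec e1 f1 g1 e2 f2 g2) x) x)) ->
  is_rtform (fun x => vsub (p x) (curl_bubble l1 l2 l3 h1 h2 h3 K0 K1 K2 K3 x)).
Proof.
intros H1 H2 HQ.
destruct (curl_bubble_affine_remainder l1 l2 l3 h1 h2 h3 K0 K1 K2 K3)
  as [a1' [b1' [c1' [a2' [b2' [c2' Haff]]]]]].
exists (a1 - a1'), (b1 - b1'), (c1 - c1'), (a2 - a2'), (b2 - b2'), (c2 - c2'),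
  (fst (rt_vec e1 f1 g1 e2 f2 g2)), (snd (rt_vec e1 f1 g1 e2 f2 g2)).
intros x; rewrite Haff, HQ.
specialize (H1 x); specialize (H2 x); cbv beta in H1, H2.
destruct (p x) as [p1 p2]; simpl in H1, H2; subst p1 p2.
unfold rtform, quad_part, dot, vadd, vscal, vsub; simpl; f_equal; ring.
Qed.

(* [Pi_h^1] reproduces [RT_1] and annihilates fields with vanishing degrees of freedom. *)
Lemma Pi1_error_eq (z1 z2 z3 : pt) (p r G : pt -> pt) :
  0 < area2 z1 z2 z3 -> is_P2vec p -> is_Pi1 z1 z2 z3 p r ->
  RT1_dofs_zero z1 z2 z3 G -> is_rtform (fun x => vsub (p x) (G x)) ->
  forall x, vsub (p x) (r x) = G x.
Proof.
intros HA Hp Hr HG HpG.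
assert (Hrt : is_rtform r) by (apply in_RT1_rtform, Hr).
set (q := fun x => vsub (G x) (vsub (p x) (r x))).
assert (Hq : is_rtform q).
{ destruct Hrt as [a1 [b1 [c1 [a2 [b2 [c2 [k1 [k2 Hr']]]]]]]].
  destruct HpG as [a1' [b1' [c1' [a2' [b2' [c2' [k1' [k2' HpG]]]]]]]].
  exists (a1 - a1'), (b1 - b1'), (c1 - c1'), (a2 - a2'), (b2 - b2'), (c2 - c2'),
    (k1 - k1'), (k2 - k2').
  intros x; specialize (Hr' x); specialize (HpG x); unfold q.
  destruct (p x), (r x), (G x); unfold rtform, vsub in *; simpl in *.
  injection Hr' as -> ->; injection HpG as Hp1 Hp2; f_equal; lra. }
assert (Hq0 := rtform_unisolvent z1 z2 z3 q HA Hq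
  (RT1_dofs_zero_sub z1 z2 z3 _ _ HG (Pi1_dofs_zero z1 z2 z3 p r HA Hp Hrt Hr))).
intros x; specialize (Hq0 x); unfold q in Hq0.
destruct (G x), (p x), (r x); unfold vsub in *; simpl in *.
injection Hq0 as E1 E2; f_equal; lra.
Qed.

Lemma wfun_eq_cubic_bubble (z1 z2 z3 : pt) (d : R) (q : pt -> pt) (beta : nat) (y : pt) :
  wfun z1 z2 z3 d q beta y =
  cubic_bubble
    (sum12 (fun i => sum12 (fun j => sum12 (fun l =>
       alpha z1 z2 z3 d i j l beta * Dcal z1 z2 z3 i j l beta q))))
    (elen z1 z2 z3 1 ^ 3 / 12 * Dcal z1 z2 z3 2 1 1 1 q)
    (elen z1 z2 z3 2 ^ 3 / 12 * Dcal z1 z2 z3 2 1 1 2 q)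
    (elen z1 z2 z3 3 ^ 3 / 12 * Dcal z1 z2 z3 2 1 1 3 q)
    (lam z1 z2 z3 1 y) (lam z1 z2 z3 2 y) (lam z1 z2 z3 3 y).
Proof.
unfold wfun, psi0, psi, sum123, cubic_bubble; cbn [Nat.add].
change (lam z1 z2 z3 4) with (lam z1 z2 z3 1); change (lam z1 z2 z3 5) with (lam z1 z2 z3 2).
ring.
Qed.

Theorem lemma5p1 (z1 z2 z3 : pt) (Hccw : 0 < area2 z1 z2 z3)
  (d : R)
  (Hd : exists c : pt, forall k : nat, (1 <= k <= 3)%nat ->
          vnorm (vsub (vtx z1 z2 z3 k) c) = d / 2)
  (p2 : pt -> pt) (Hp2 : is_P2vec p2)
  (r : pt -> pt) (Hr : is_Pi1 z1 z2 z3 p2 r) :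
  forall beta : nat, (1 <= beta <= 3)%nat ->
  forall x : pt, in_tri z1 z2 z3 x ->
    vsub (p2 x) (r x) = gradperp (wfun z1 z2 z3 d p2 beta) x.
Proof.
intros beta Hbeta x _.
assert (HA : area2 z1 z2 z3 <> 0) by lra.
destruct Hd as [c Hc].
pose proof Hp2 as [[a1 [b1 [c1 [e1 [f1 [g1 Hp1]]]]]] [a2 [b2 [c2 [e2 [f2 [g2 Hp2']]]]]]].
rewrite (gradperp_ext _ _ x (wfun_eq_cubic_bubble z1 z2 z3 d p2 beta)), gradperp_lam_bubble
  by exact Hccw.
rewrite !(edge_coef_eq z1 z2 z3 Hp1 Hp2') by apply elen_pos, Hccw.
assert (Hdiam : d = elen z1 z2 z3 beta * elen z1 z2 z3 (beta + 1) * elen z1 z2 z3 (beta + 2)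
                   / area2 z1 z2 z3)
  by (rewrite elen_prod_cyclic by exact Hbeta; exact (circumdiameter z1 z2 z3 c d Hccw Hc)).
rewrite (alpha_sum_center_coef z1 z2 z3 Hp1 Hp2' beta d HA)
  by (exact Hdiam || apply elen_pos, Hccw).
rewrite !elen_sq.
apply (Pi1_error_eq z1 z2 z3 p2 r); auto.
- apply curl_W_dofs_zero, Hccw.
- apply (rtform_sub_curl_bubble _ _ _ _ _ _ _ _ _ _ Hp1 Hp2').
  intros y; apply quadratic_part_curl_bubble; auto.
  pose proof (edge_dot_pos z1 z2 z3 Hccw beta); lra.
Qed.
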